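(* Let $k$ be a field with a fixed algebraic closure $\overline{k}$, and let $l/k$ be a finite extension inside $\overline{k}$ which is normal and simple (generated by a single element). Then for every integer $N$ there exists $n\ge N$ and a hypersurface $H\subseteq\mathbf{P}^n_k$ which is an $l$-normic form.
   Context: All finite extensions of $k$ are considered as subfields of the fixed algebraic closure $\overline{k}$. A hypersurface $H\subseteq\mathbf{P}^n_k$ is an $l$-normic form if for every finite extension $k'/k$ inside $\overline{k}$, one has $H(k')\ne\emptyset$ if and only if $l\subseteq k'$. *)

From HB Require Import structures.
From mathcomp Require Import all_boot all_order all_algebra.
From mathcomp Require Import mpoly.

Set Implicit Arguments.
Unset Strict Implicit.
Unset Printing Implicit Defensive.

Import GRing.Theory.
Local Open Scope ring_scope.

(* The base field k is [K]; its fixed algebraic closure kbar is [Kbar],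
   with the structure map [iota : K -> Kbar]. Intermediate fields are
   subsets of Kbar (given as predicates Kbar -> Prop). *)

Definition is_algebraic_over (K : fieldType) (Kbar : fieldType)
    (iota : {rmorphism K -> Kbar}) : Prop :=
  forall x : Kbar, exists p : {poly K}, p != 0 /\ root (map_poly iota p) x.

Definition is_subfield (Kbar : fieldType) (S : Kbar -> Prop) : Prop :=
  [/\ S 0, S 1,
      (forall x y, S x -> S y -> S (x - y)),
      (forall x y, S x -> S y -> S (x * y)) &
      (forall x, S x -> S x^-1)].

Definition is_ext (K Kbar : fieldType) (iota : {rmorphism K -> Kbar})
    (S : Kbar -> Prop) : Prop :=
  is_subfield S /\ (forall c : K, S (iota c)).

Definition is_finite_ext (K Kbar : fieldType) (iota : {rmorphism K -> Kbar})
    (S : Kbar -> Prop) : Prop :=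
  is_ext iota S /\
  exists s : seq Kbar, (forall x, x \in s -> S x) /\
    forall x, S x -> exists c : 'I_(size s) -> K,
      x = \sum_(i < size s) iota (c i) * s`_i.

Definition adjoin (K Kbar : fieldType) (iota : {rmorphism K -> Kbar})
    (a : Kbar) : Kbar -> Prop :=
  fun x => forall S : Kbar -> Prop, is_ext iota S -> S a -> S x.

Definition is_simple_ext (K Kbar : fieldType) (iota : {rmorphism K -> Kbar})
    (S : Kbar -> Prop) : Prop :=
  exists a : Kbar, forall x, S x <-> adjoin iota a x.

Definition is_normal_ext (K Kbar : fieldType) (iota : {rmorphism K -> Kbar})
    (S : Kbar -> Prop) : Prop :=
  forall p : {poly K}, irreducible_poly p ->
    (exists x, S x /\ root (map_poly iota p) x) ->
    forall y, root (map_poly iota p) y -> S y.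

(* A hypersurface in P^n_k, given by a nonzero homogeneous form of positive
   degree in the n+1 homogeneous coordinates x_0, ..., x_n. *)
Definition is_hypersurface (K : fieldType) (n : nat) (F : {mpoly K[n.+1]}) : Prop :=
  F != 0 /\ exists d : nat, (0 < d)%N /\ F \is d.-homog.

(* H(k') is nonempty: there is a k'-point of P^n, i.e. a nonzero tuple with
   coordinates in k', on which F vanishes. *)
Definition has_point_in (K Kbar : fieldType) (iota : {rmorphism K -> Kbar})
    (n : nat) (F : {mpoly K[n.+1]}) (S : Kbar -> Prop) : Prop :=
  exists x : 'I_n.+1 -> Kbar,
    (forall i, S (x i)) /\ (exists i, x i != 0) /\
    (map_mpoly iota F).@[x] = 0.

Definition is_normic_form (K Kbar : fieldType) (iota : {rmorphism K -> Kbar})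
    (l : Kbar -> Prop) (n : nat) (F : {mpoly K[n.+1]}) : Prop :=
  forall k' : Kbar -> Prop, is_finite_ext iota k' ->
    (has_point_in iota F k' <-> (forall y, l y -> k' y)).

(** Write l = k(a) and let f, of degree d, be the minimal polynomial of a.
    The binary form Phi(u, v) = v^d f(u/v) has no zero (u, v) <> (0, 0) over a
    field k' unless f has a root in k'. Iterating it as F_0 = x_0 and
    F_(i+1) = Phi(F_i, x_(i+1)^(d^i)), where the exponent keeps F_(i+1)
    homogeneous of degree d^(i+1), gives forms in arbitrarily many variables
    with the same property. By normality a root y of f in k' lies in l = k[a];
    as f is also the minimal polynomial of y, k[y] = l, so l is contained in
    k'. Conversely (a, 1, 0, ..., 0) is a zero of F_n over l. *)

From HB Require Import structures.
From mathcomp Require Import all_boot all_order all_algebra.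
From mathcomp Require Import mpoly ring.
From Stdlib Require Import Classical_Prop.

Set Implicit Arguments.
Unset Strict Implicit.
Unset Printing Implicit Defensive.
Import GRing.Theory.
Local Open Scope ring_scope.

Section ExtensionClosure.
Variables (K Kbar : fieldType) (iota : {rmorphism K -> Kbar}) (S : Kbar -> Prop).
Hypothesis S_ext : is_ext iota S.

Lemma ext0 : S 0. Proof. by case: S_ext => -[]. Qed.
Lemma ext1 : S 1. Proof. by case: S_ext => -[]. Qed.
Lemma ext_iota c : S (iota c). Proof. by case: S_ext. Qed.

Lemma extB x y : S x -> S y -> S (x - y).
Proof. by case: S_ext => -[] _ _ closedB _ _ _; apply: closedB. Qed.

Lemma extM x y : S x -> S y -> S (x * y).
Proof. by case: S_ext => -[] _ _ _ closedM _ _; apply: closedM. Qed.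

Lemma extV x : S x -> S x^-1.
Proof. by case: S_ext => -[] _ _ _ _ closedV _; apply: closedV. Qed.

Lemma extD x y : S x -> S y -> S (x + y).
Proof.
move=> Sx Sy; rewrite -[y]opprK; apply: extB => //.
by rewrite -sub0r; apply: extB => //; exact: ext0.
Qed.

Lemma extX x m : S x -> S (x ^+ m).
Proof.
by move=> Sx; elim: m => [|m IH]; rewrite ?expr0 ?exprS; [exact: ext1 | exact: extM].
Qed.

Lemma ext_sum (I : finType) (F : I -> Kbar) : (forall i, S (F i)) -> S (\sum_i F i).
Proof. by move=> SF; apply: (big_ind S) => //; [exact: ext0 | exact: extD]. Qed.

End ExtensionClosure.

Section MinimalPolynomial.
Variables (K Kbar : fieldType) (iota : {rmorphism K -> Kbar}).

Local Notation ev p x := ((map_poly iota p).[x]).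

Lemma horner_mapM (p q : {poly K}) x : ev (p * q) x = ev p x * ev q x.
Proof. by rewrite rmorphM hornerM. Qed.

Lemma horner_map_modp (f q : {poly K}) a :
  root (map_poly iota f) a -> ev (q %% f) a = ev q a.
Proof.
move=> fa; rewrite [in RHS](divp_eq q f).
by rewrite rmorphD hornerD horner_mapM (eqP fa) mulr0 add0r.
Qed.

Lemma minimal_poly_exists (a : Kbar) (p : {poly K}) :
  p != 0 -> root (map_poly iota p) a ->
  exists f : {poly K}, [/\ f != 0, root (map_poly iota f) a &
    forall r, root (map_poly iota r) a -> f %| r].
Proof.
move: {2}(size p) (leqnn (size p)) => m; elim: m p => [|m IH] q sq q_neq0 qa.
  by move: q_neq0; rewrite -size_poly_eq0 -leqn0 sq.
have [[r [ra q_ndvd_r]]|q_min] :=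
  classic (exists r, root (map_poly iota r) a /\ ~~ (q %| r)).
  apply: (IH (r %% q)); last by rewrite /root horner_map_modp.
    by rewrite -ltnS (leq_trans _ sq) // ltn_modp.
  by apply: contra q_ndvd_r => /eqP/modp_eq0P.
exists q; split=> // r ra.
by apply/negPn/negP => q_ndvd_r; apply: q_min; exists r.
Qed.

Lemma minimal_poly_irreducible (f : {poly K}) (a : Kbar) :
  f != 0 -> root (map_poly iota f) a ->
  (forall r, root (map_poly iota r) a -> f %| r) -> irreducible_poly f.
Proof.
move=> f_neq0 fa f_min; split.
  rewrite ltnNge leq_eqVlt ltnS leqn0 size_poly_eq0 (negPf f_neq0) orbF.
  apply/negP => /size_poly1P [c c_neq0 fE]; move: fa.
  by rewrite fE map_polyC /root hornerC fmorph_eq0 (negPf c_neq0).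
move=> q sq q_dvd_f.
have fE := divpK q_dvd_f.
have q_neq0 : q != 0 by apply: contraNneq f_neq0 => q0; move: q_dvd_f; rewrite q0 dvd0p.
have h_neq0 : f %/ q != 0 by apply: contraNneq f_neq0 => h0; rewrite -fE h0 mul0r.
move: fa; rewrite /root -{1}fE horner_mapM mulf_eq0 => /orP [ha|qa].
  have := dvdp_leq h_neq0 (f_min _ ha); rewrite -{1}fE size_mul //.
  have : size q != 0%N by rewrite size_poly_eq0.
  by move: sq; case: (size q) => [|[|s]] // _ _; rewrite addnS /= -{2}[size _]addn0 leq_add2l.
by rewrite /eqp q_dvd_f f_min.
Qed.

Definition poly_values (a : Kbar) : Kbar -> Prop := fun x => exists q, x = ev q a.

Lemma poly_values_inv (f : {poly K}) (a x : Kbar) :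
  irreducible_poly f -> root (map_poly iota f) a ->
  poly_values a x -> poly_values a x^-1.
Proof.
move=> f_irr fa [q ->].
have [qa|qa_neq0] := eqVneq (ev q a) 0.
  by exists 0; rewrite qa invr0 rmorph0 horner0.
have : coprimep f q.
  rewrite irreducible_poly_coprime //; apply: contra qa_neq0 => /dvdpP [g ->].
  by rewrite horner_mapM (eqP fa) mulr0.
case/Bezout_coprimepP => -[u v] /= /eqp_size; rewrite size_poly1.
move=> /eqP/size_poly1P [c c_neq0 cE].
have vq : ev v a * ev q a = iota c.
  have := congr1 (fun r => ev r a) cE.
  by rewrite /= rmorphD hornerD !horner_mapM (eqP fa) mulr0 add0r map_polyC hornerC.
have va_neq0 : ev v a != 0.
  apply: contraNneq c_neq0 => va0.
  by move: vq; rewrite va0 mul0r => /esym/eqP; rewrite fmorph_eq0.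
exists (c^-1 *: v).
by rewrite map_polyZ hornerZ fmorphV -vq invfM mulrAC mulVf // mul1r.
Qed.

Lemma poly_values_ext (f : {poly K}) (a : Kbar) :
  irreducible_poly f -> root (map_poly iota f) a -> is_ext iota (poly_values a).
Proof.
move=> f_irr fa; split; last by move=> c; exists c%:P; rewrite map_polyC hornerC.
split; last by move=> x; exact: poly_values_inv f_irr fa.
- by exists 0; rewrite rmorph0 horner0.
- by exists 1; rewrite rmorph1 hornerC.
- by move=> x y [p ->] [q ->]; exists (p - q); rewrite rmorphB hornerD hornerN.
- by move=> x y [p ->] [q ->]; exists (p * q); rewrite horner_mapM.
Qed.

Lemma adjoin_poly_values (f : {poly K}) (a x : Kbar) :
  irreducible_poly f -> root (map_poly iota f) a -> adjoin iota a x -> poly_values a x.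
Proof.
move=> f_irr fa; apply; first exact: poly_values_ext f_irr fa.
by exists 'X; rewrite map_polyX hornerX.
Qed.

Lemma irredp_root_small_eq0 (f r : {poly K}) (y : Kbar) :
  irreducible_poly f -> root (map_poly iota f) y ->
  (size r < size f)%N -> root (map_poly iota r) y -> r = 0.
Proof.
move=> f_irr fy sr ry; apply/eqP/negPn/negP => r_neq0.
have f_dvd_r : f %| r.
  apply/negPn/negP => f_ndvd_r.
  have : coprimep (map_poly iota f) (map_poly iota r).
    by rewrite coprimep_map irreducible_poly_coprime.
  by move/coprimep_root/(_ fy); rewrite (eqP ry) eqxx.
by move: (dvdp_leq r_neq0 f_dvd_r); rewrite leqNgt sr.
Qed.

(* The powers y^j, j < d, read in the basis 1, a, ..., a^(d-1) of k[a], form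
   an invertible matrix since no nonzero polynomial of degree < d vanishes
   at y; hence a is a k-combination of them. *)
Lemma conjugate_generates (f p : {poly K}) (a y : Kbar) :
  irreducible_poly f -> root (map_poly iota f) a -> root (map_poly iota f) y ->
  y = ev p a -> exists w : 'I_(size f).-1 -> K, a = \sum_j iota (w j) * y ^+ j.
Proof.
move=> f_irr fa fy yE; pose d := (size f).-1.
have size_f : size f = d.+1 by rewrite /d prednK // ltnW //; case: f_irr.
have size_modf (q : {poly K}) : (size (q %% f)%R <= d)%N.
  by rewrite -ltnS -size_f ltn_modp irredp_neq0.
pose M : 'M[K]_d := \matrix_(j < d) poly_rV (p ^+ j %% f).
have evM (w : 'rV[K]_d) : ev (rVpoly (w *m M)) a = \sum_j iota (w 0 j) * y ^+ j.
  rewrite mulmx_sum_row linear_sum rmorph_sum horner_sum; apply: eq_bigr => j _.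
  by rewrite rowK linearZ /= poly_rV_K // map_polyZ hornerZ horner_map_modp //
    rmorphXn horner_exp -yE.
have M_inj (w : 'rV[K]_d) : w *m M = 0 -> w = 0.
  move=> wM.
  have rVpolyE : rVpoly w = \sum_(j < d) w 0 j *: 'X^j.
    rewrite {1}(row_sum_delta w) linear_sum.
    by apply: eq_bigr => j _; rewrite linearZ /= rVpoly_delta.
  have wy : root (map_poly iota (rVpoly w)) y.
    rewrite /root rVpolyE rmorph_sum horner_sum.
    have : ev (rVpoly (w *m M)) a = 0 by rewrite wM linear0 rmorph0 horner0.
    rewrite evM => e0; apply/eqP; rewrite -[RHS]e0; apply: eq_bigr => j _.
    by rewrite -mul_polyC rmorphM /= map_polyC hornerM hornerC rmorphXn /=
      map_polyX hornerXn.
  rewrite -[w]rVpolyK (irredp_root_small_eq0 f_irr fy _ wy) ?linear0 //.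
  by rewrite size_f ltnS size_poly.
have M_unit : M \in unitmx by rewrite -row_free_unit; apply: inj_row_free.
exists (fun j => (poly_rV ('X %% f) *m invmx M) 0 j).
by rewrite -evM mulmxKV // poly_rV_K // horner_map_modp // map_polyX hornerX.
Qed.

Lemma ext_conjugate (f p : {poly K}) (a y : Kbar) (S : Kbar -> Prop) :
  irreducible_poly f -> root (map_poly iota f) a -> root (map_poly iota f) y ->
  y = ev p a -> is_ext iota S -> S y -> S a.
Proof.
move=> f_irr fa fy yE S_ext Sy.
have [w ->] := conjugate_generates f_irr fa fy yE.
apply: (ext_sum S_ext) => j.
by apply: (extM S_ext); [exact: ext_iota | exact: (extX S_ext)].
Qed.

End MinimalPolynomial.

Section IteratedForms.
Variables (K : fieldType) (f : {poly K}) (n : nat).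
Hypothesis f_nonconst : (1 < size f)%N.

Let d := (size f).-1.

Let size_f : size f = d.+1.
Proof. by rewrite /d prednK // ltnW. Qed.

Let d_gt0 : (0 < d)%N.
Proof. by rewrite -ltnS -size_f. Qed.

Let f_neq0 : f != 0.
Proof. by rewrite -size_poly_eq0 size_f. Qed.

Definition homf (A B : {mpoly K[n.+1]}) : {mpoly K[n.+1]} :=
  \sum_(j < d.+1) f`_j *: (A ^+ j * B ^+ (d - j)).

Fixpoint normic_form (i : nat) : {mpoly K[n.+1]} :=
  if i is i'.+1 then homf (normic_form i') ('X_(inord i) ^+ (d ^ i'))
  else 'X_(inord 0).

Lemma normic_form_homog i : normic_form i \is (d ^ i).-homog.
Proof.
have X_homog (k : 'I_n.+1) : ('X_k : {mpoly K[n.+1]}) \is 1.-homog.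
  by rewrite dhomogX; apply/eqP; apply: mdeg1.
elim: i => [|i IH]; first exact: X_homog.
apply: (big_ind (fun p : {mpoly K[n.+1]} => p \is (d ^ i.+1).-homog)).
- exact: dhomog0.
- by move=> p q; apply: dhomogD.
move=> j _; apply: dhomogZ.
have jd : (j <= d)%N by rewrite -ltnS.
rewrite (_ : d ^ i.+1 = d ^ i * j + d ^ i * (d - j))%N; last first.
  by rewrite -mulnDr subnKC // expnSr.
apply: dhomogM; first exact: dhomogMn.
have := dhomogMn (d ^ i) (X_homog (inord i.+1)); rewrite mul1n.
exact: dhomogMn.
Qed.

Section Evaluation.
Variables (Kbar : fieldType) (iota : {rmorphism K -> Kbar}).

Local Notation mev x p := ((map_mpoly iota p).@[x]).

Definition homf_val (u v : Kbar) : Kbar :=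
  \sum_(j < d.+1) iota f`_j * (u ^+ j * v ^+ (d - j)).

Lemma mev_homf x A B : mev x (homf A B) = homf_val (mev x A) (mev x B).
Proof.
rewrite /homf /homf_val (rmorph_sum (map_mpoly iota)) raddf_sum.
apply: eq_bigr => j _.
by rewrite -mul_mpolyC /= !rmorphM !rmorphXn /= map_mpolyC mevalC.
Qed.

Lemma mev_normic_formS x i :
  mev x (normic_form i.+1) = homf_val (mev x (normic_form i)) (x (inord i.+1) ^+ (d ^ i)).
Proof. by rewrite /= mev_homf rmorphXn /= rmorphXn /= map_mpolyX mevalXU. Qed.

Lemma mev_normic_form0 x : mev x (normic_form 0) = x (inord 0).
Proof. by rewrite /= map_mpolyX mevalXU. Qed.

Lemma homf_val_u0 u : homf_val u 0 = iota (lead_coef f) * u ^+ d.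
Proof.
rewrite /homf_val big_ord_recr /= subnn expr0 mulr1 big1 ?add0r.
  by rewrite lead_coefE size_f.
by move=> j _; rewrite expr0n subn_eq0 leqNgt ltn_ord /= !mulr0.
Qed.

Lemma homf_val_dehomog u v : v != 0 -> homf_val u v = v ^+ d * (map_poly iota f).[u / v].
Proof.
move=> v_neq0; rewrite horner_coef size_map_poly size_f mulr_sumr.
apply: eq_bigr => j _; rewrite coef_map /=.
have -> : v ^+ d = v ^+ (d - j) * v ^+ j by rewrite -exprD subnK // -ltnS.
have vj_neq0 : v ^+ j != 0 by rewrite expf_neq0.
by rewrite expr_div_n; field.
Qed.

Lemma homf_val_eq0 u v : homf_val u v = 0 ->
  (u = 0 /\ v = 0) \/ root (map_poly iota f) (u / v).
Proof.
have [->|v_neq0] := eqVneq v 0.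
  rewrite homf_val_u0 => /eqP; rewrite mulf_eq0 fmorph_eq0 lead_coef_eq0 (negPf f_neq0).
  by rewrite expf_eq0 => /andP [_ /eqP]; left.
by rewrite homf_val_dehomog // => /eqP; rewrite mulf_eq0 expf_eq0 (negPf v_neq0) andbF; right.
Qed.

Lemma ext_homf_val (S : Kbar -> Prop) u v :
  is_ext iota S -> S u -> S v -> S (homf_val u v).
Proof.
move=> S_ext Su Sv; apply: (ext_sum S_ext) => j.
apply: (extM S_ext); first exact: ext_iota.
by apply: (extM S_ext); apply: (extX S_ext).
Qed.

Section Points.
Variables (S : Kbar -> Prop) (x : 'I_n.+1 -> Kbar).
Hypotheses (S_ext : is_ext iota S) (Sx : forall i, S (x i)).

Lemma ext_normic_form i : S (mev x (normic_form i)).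
Proof.
elim: i => [|i IH]; first by rewrite mev_normic_form0.
by rewrite mev_normic_formS; apply: ext_homf_val => //; apply: (extX S_ext).
Qed.

Lemma normic_form_eq0 i : mev x (normic_form i) = 0 ->
  (exists z, S z /\ root (map_poly iota f) z) \/ forall j, (j <= i)%N -> x (inord j) = 0.
Proof.
elim: i => [|i IH].
  by rewrite mev_normic_form0 => x0; right => j; rewrite leqn0 => /eqP ->.
rewrite mev_normic_formS => /homf_val_eq0 [[Fi0 /eqP]|root_quot]; last first.
  left; eexists; split; last exact: root_quot.
  by apply: (extM S_ext); [exact: ext_normic_form | apply: (extV S_ext); exact: (extX S_ext)].
rewrite expf_eq0 => /andP [_ /eqP xi0].
case: (IH Fi0) => [|x_eq0]; first by left.
by right => j; rewrite leq_eqVlt ltnS => /predU1P [->|]; [exact: xi0 | exact: x_eq0].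
Qed.

End Points.
Lemma mev_normic_form_unit_neq0 i : (i <= n)%N ->
  mev (fun j : 'I_n.+1 => if val j == 0%N then 1 else 0) (normic_form i) != 0.
Proof.
elim: i => [|i IH] hi; first by rewrite mev_normic_form0 /= inordK // oner_neq0.
rewrite mev_normic_formS /= inordK //= expr0n expn_eq0 eqn0Ngt d_gt0 /= homf_val_u0.
by rewrite mulf_neq0 ?expf_neq0 ?IH ?(ltnW hi) // fmorph_eq0 lead_coef_eq0.
Qed.

Lemma normic_form_point_root (S : Kbar -> Prop) :
  is_ext iota S -> has_point_in iota (normic_form n) S ->
  exists z, S z /\ root (map_poly iota f) z.
Proof.
move=> S_ext [x [Sx [[i xi_neq0] Fx]]].
case: (normic_form_eq0 S_ext Sx Fx) => // x_eq0.
by move: xi_neq0; rewrite -(inord_val i) x_eq0 ?eqxx // -ltnS.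
Qed.

Lemma normic_form_root_point (S : Kbar -> Prop) (a : Kbar) :
  (0 < n)%N -> is_ext iota S -> S a -> root (map_poly iota f) a ->
  has_point_in iota (normic_form n) S.
Proof.
move=> n_gt0 S_ext Sa fa.
pose x (i : 'I_n.+1) : Kbar := if val i == 0%N then a else if val i == 1%N then 1 else 0.
have x_vanish i : (0 < i <= n)%N -> mev x (normic_form i) = 0.
  elim: i => [//|[|i] IH] /andP [_ hi]; rewrite mev_normic_formS.
    rewrite mev_normic_form0 /x /= !inordK // expr1n homf_val_dehomog ?oner_neq0 //.
    by rewrite divr1 (eqP fa) mulr0.
  rewrite IH ?(ltnW hi) // /x /= inordK //= expr0n expn_eq0 eqn0Ngt d_gt0 /=.
  by rewrite homf_val_u0 expr0n eqn0Ngt d_gt0 mulr0.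
exists x; split; [|split].
- move=> i; rewrite /x; case: ifP => // _.
  by case: ifP => _; [exact: (ext1 S_ext) | exact: (ext0 S_ext)].
- by exists (inord 1); rewrite /x /= inordK // oner_neq0.
- by apply: x_vanish; rewrite n_gt0 leqnn.
Qed.
End Evaluation.

Lemma normic_form_neq0 : normic_form n != 0.
Proof.
apply: contraTneq (mev_normic_form_unit_neq0 (@idfun K) (leqnn n)) => ->.
by rewrite !raddf0 eqxx.
Qed.

Lemma normic_form_hypersurface : is_hypersurface (normic_form n).
Proof.
split; first exact: normic_form_neq0.
by exists (d ^ n)%N; rewrite expn_gt0 d_gt0 normic_form_homog.
Qed.
End IteratedForms.

Lemma normal_simple_ext_sub (K Kbar : fieldType) (iota : {rmorphism K -> Kbar})
    (l S : Kbar -> Prop) (f : {poly K}) (a : Kbar) :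
  (forall x, l x <-> adjoin iota a x) -> is_normal_ext iota l ->
  irreducible_poly f -> root (map_poly iota f) a ->
  is_ext iota S -> (exists z, S z /\ root (map_poly iota f) z) ->
  forall y, l y -> S y.
Proof.
move=> l_adjoin l_normal f_irr fa S_ext [z [Sz fz]] y /l_adjoin ly.
have la : l a by apply/l_adjoin.
have lz : l z by apply: (l_normal f f_irr) fz; exists a.
have [q zE] := adjoin_poly_values f_irr fa (proj1 (l_adjoin z) lz).
exact: ly _ S_ext (ext_conjugate f_irr fa fz zE S_ext Sz).
Qed.

Theorem proposition3p3
  (K : fieldType) (Kbar : closedFieldType) (iota : {rmorphism K -> Kbar})
  (Halg : is_algebraic_over iota)
  (l : Kbar -> Prop)
  (Hl_fin : is_finite_ext iota l)
  (Hl_normal : is_normal_ext iota l)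
  (Hl_simple : is_simple_ext iota l) :
  forall N : nat, exists n : nat, (N <= n)%N /\
    exists F : {mpoly K[n.+1]}, is_hypersurface F /\ is_normic_form iota l F.
Proof.
move=> N; have [a l_adjoin] := Hl_simple.
have [p [p_neq0 pa]] := Halg a.
have [f [f_neq0 fa f_min]] := minimal_poly_exists p_neq0 pa.
have f_irr := minimal_poly_irreducible f_neq0 fa f_min.
have f_nonconst : (1 < size f)%N by case: f_irr.
exists N.+1; split => //; exists (normic_form f N.+1 N.+1).
split; first exact: normic_form_hypersurface.
move=> k' [k'_ext _]; split.
  move/(normic_form_point_root f_nonconst k'_ext).
  exact: normal_simple_ext_sub l_adjoin Hl_normal f_irr fa k'_ext.
move=> l_sub_k'; have k'a : k' a by apply/l_sub_k'/l_adjoin.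
exact: (normic_form_root_point f_nonconst (ltn0Sn N) k'_ext k'a fa).
Qed.
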